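(* Let $s$ and $A$ be fixed positive integers, and let $\beta$ be the maximal exponent in the prime factorization of $A$ (with $\beta=0$ if $A=1$). Let $x$ and $n$ be positive integers such that $x$ divides $A^n(n!)^s$. Then for every positive integer $a$, $$x\leq \bigl(a\,\omega(x)+1\bigr)^{n\omega(x)(\beta+s)}\,(An^s)^{n\left(\beta\omega(x)+\frac{s}{a}\right)}.$$ In particular, if $A=1$, then $x\leq (a\omega(x)+1)^{n\omega(x)s}(n^s)^{ns/a}$.
   Context: For a positive integer $x$, $\omega(x)$ denotes the number of distinct prime factors of $x$. *)

From Stdlib Require Import Reals.
From mathcomp Require Import all_boot.

Definition omega (x : nat) : nat := size (primes x).

Definition maxexp (A : nat) : nat := \max_(p <- primes A) logn p A.

From Stdlib Require Import Reals Lra.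
From mathcomp Require Import all_boot zify.

(* Write x as the product of p ^ e_p over its omega(x) prime divisors. Divisibility gives
   e_p <= n logn_p A + s logn_p n! <= n beta + s logn_p n!, and Legendre's formula gives
   (p - 1) logn_p n! <= n. Put K = a omega(x). A prime p <= K + 1 contributes
   (p ^ e_p) ^ K <= (K + 1) ^ (n (beta + s) K); a larger prime divides A or n!, hence is at most
   A n^s, and K logn_p n! <= n, so it contributes at most (A n^s) ^ (n beta K + n s).
   Multiplying over the omega(x) primes bounds x ^ K, and taking K-th roots gives the claim. *)

Lemma prime_dvd_fact_le [p n] : prime p -> p %| n`! -> p <= n.
Proof.
move=> p_pr; elim: n => [|n IHn]; first by rewrite fact0 dvdn1 => /eqP p1; rewrite p1 in p_pr.
rewrite factS Euclid_dvdM // => /orP [/dvdn_leq -> // | /IHn]; exact: leqW.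
Qed.

Lemma leq_sum_divn_exp p N n : 0 < p -> (p - 1) * \sum_(1 <= k < N.+1) n %/ p ^ k <= n.
Proof.
move=> p_gt0; elim: N n => [|N IHN] n; first by rewrite big_geq // muln0.
rewrite big_nat_recl // expn1.
have -> : \sum_(1 <= k < N.+1) n %/ p ^ k.+1 = \sum_(1 <= k < N.+1) (n %/ p) %/ p ^ k.
  by apply: eq_bigr => k _; rewrite expnS divnMA.
have := IHN (n %/ p); have := leq_divM n p.
set q := n %/ p; set S := \sum_(1 <= k < N.+1) _; nia.
Qed.

Lemma leq_logn_fact [p] n : prime p -> (p - 1) * logn p n`! <= n.
Proof. by move=> p_pr; rewrite logn_fact //; apply/leq_sum_divn_exp/prime_gt0. Qed.

Lemma logn_le_maxexp p A : logn p A <= maxexp A.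
Proof.
have [pA | /negbTE pA] := boolP (p \in primes A).
  exact: (@leq_bigmax_seq _ _ xpredT (logn^~ A) p pA).
by move: pA; rewrite -logn_gt0 lt0n => /negbFE/eqP ->.
Qed.

Lemma leq_wexp2r [m1 m2] e : m1 <= m2 -> m1 ^ e <= m2 ^ e.
Proof. by case: e => [|e] // le_m; rewrite leq_exp2r. Qed.

Lemma omega_eq0 [x] : 0 < x -> omega x = 0 -> x = 1.
Proof.
move=> x_gt0 /size0nil /eqP; rewrite primes_eq0 => x_lt2.
by apply/eqP; rewrite eqn_leq -ltnS x_lt2 x_gt0.
Qed.

Section DivisorBound.

Variables s A n K : nat.
Hypothesis A_gt0 : 0 < A.

Lemma prime_le_base [p] : prime p -> p %| A ^ n * n`! ^ s -> p <= A * n ^ s.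
Proof.
move=> p_pr; rewrite Euclid_dvdM // !Euclid_dvdX // => /orP [/andP [pA n_gt0] | /andP [pn s_gt0]].
  by apply: leq_trans (dvdn_leq A_gt0 pA) _; rewrite leq_pmulr // expn_gt0 n_gt0.
have p_le_n := prime_dvd_fact_le p_pr pn.
apply: (leq_trans p_le_n (leq_trans _ (leq_pmull _ A_gt0))).
rewrite -{1}(expn1 n); apply: leq_pexp2l => //.
exact: leq_trans (prime_gt0 p_pr) p_le_n.
Qed.

(* Small primes are bounded by [K.+1]; for large ones [K * logn p n`! <= n]. *)
Lemma pfactor_exp_le p e :
  prime p -> p %| A ^ n * n`! ^ s -> e <= n * logn p A + s * logn p n`! ->
  (p ^ e) ^ K <= K.+1 ^ (n * (maxexp A + s) * K) * (A * n ^ s) ^ (n * maxexp A * K + n * s).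
Proof.
move=> p_pr p_dvd e_le.
have lA := logn_le_maxexp p A; have lfact := leq_logn_fact n p_pr.
have p_gt1 := prime_gt1 p_pr; have p_le_M := prime_le_base p_pr p_dvd.
have M_gt0 : 0 < A * n ^ s by apply: leq_trans (prime_gt0 p_pr) p_le_M.
rewrite -expnM; have [p_le | K_lt] := leqP p K.+1.
  rewrite -[p ^ _]muln1 leq_mul ?expn_gt0 ?M_gt0 //.
  apply: leq_trans (leq_wexp2r _ p_le) (leq_pexp2l _ _) => //.
  by rewrite leq_mul2r; apply/orP; right; nia.
have Kv : K * logn p n`! <= n.
  by apply: leq_trans lfact; apply: leq_mul => //; lia.
rewrite -[p ^ _]mul1n leq_mul ?expn_gt0 //.
apply: leq_trans (leq_pexp2l (ltnW p_gt1) _) (leq_wexp2r _ p_le_M).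
have := leq_mul e_le (leqnn K); have := leq_mul (leqnn s) Kv.
have := leq_mul (leq_mul (leqnn n) lA) (leqnn K); nia.
Qed.

Lemma dvdn_exp_le [x] : 0 < x -> x %| A ^ n * n`! ^ s ->
  x ^ K <= (K.+1 ^ (n * (maxexp A + s) * K) * (A * n ^ s) ^ (n * maxexp A * K + n * s)) ^ omega x.
Proof.
move=> x_gt0 x_dvd.
have N_gt0 : 0 < A ^ n * n`! ^ s by rewrite muln_gt0 !expn_gt0 A_gt0 fact_gt0.
rewrite {1}(prod_prime_decomp x_gt0) prime_decompE big_map /=.
rewrite (big_morph (fun m => m ^ K) (fun m1 m2 => expnMn m1 m2 K) (exp1n K)).
rewrite /omega -(card_ord (size (primes x))) -prod_nat_const (big_nth 0) big_mkord.
apply: leq_prod => i _; set p := nth 0 (primes x) i.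
have: p \in primes x by apply: mem_nth.
rewrite mem_primes => /and3P [p_pr _ p_dvd_x].
apply: pfactor_exp_le => //; first exact: dvdn_trans x_dvd.
have := dvdn_leq_log p N_gt0 x_dvd.
by rewrite lognM ?expn_gt0 ?A_gt0 ?fact_gt0 // !lognX.
Qed.

End DivisorBound.

Open Scope R_scope.

Lemma INR_expn m k : INR (m ^ k)%N = INR m ^ k.
Proof. by elim: k => [|k IHk]; rewrite ?expn0 // expnS mult_INR IHk. Qed.

Lemma pow_lt_compat_l [X Y K] : 0 <= Y < X -> (0 < K)%N -> Y ^ K < X ^ K.
Proof.
move=> [Y_ge0 Y_lt]; case: K => [|K] // _; elim: K => [|K IHK]; first by rewrite !pow_1.
by apply: Rmult_le_0_lt_compat => //; apply: (pow_le _ K.+1).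
Qed.

Lemma pow_le_pow_inv [X Y K] : 0 <= Y -> (0 < K)%N -> X ^ K <= Y ^ K -> X <= Y.
Proof.
move=> Y_ge0 K_gt0 le_pow; apply: Rnot_lt_le => Y_lt.
by have := pow_lt_compat_l (conj Y_ge0 Y_lt) K_gt0; lra.
Qed.

Lemma pow_bound_identity (c M n w b s a : nat) : 0 < INR M -> (0 < a)%N ->
  (INR c ^ (n * w * (b + s)) * Rpower (INR M) (INR n * (INR (b * w) + INR s / INR a))) ^ (a * w)
  = (INR c ^ (n * (b + s) * (a * w)) * INR M ^ (n * b * (a * w) + n * s)) ^ w.
Proof.
move=> M_gt0 a_gt0.
have a_neq0 : INR a <> 0 by apply: not_0_INR; apply/eqP; rewrite -lt0n.
rewrite !Rpow_mult_distr -!pow_mult; congr (_ * _).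
  by congr (_ ^ _); lia.
rewrite -!Rpower_pow ?Rpower_mult //; last exact: exp_pos.
congr (Rpower _ _); rewrite !mult_INR !plus_INR !mult_INR; field => //.
Qed.

Lemma dvdn_fact_bound [s A x n a : nat] : (0 < A)%N -> (0 < x)%N -> (0 < n)%N ->
  (x %| A ^ n * (n `!) ^ s)%N -> (0 < a)%N ->
  INR x <= INR (a * omega x + 1)%N ^ (n * omega x * (maxexp A + s))%N
           * Rpower (INR (A * n ^ s)%N)
                    (INR n * (INR (maxexp A * omega x)%N + INR s / INR a)).
Proof.
move=> hA hx hn hdiv ha.
set w := omega x; set b := maxexp A; set M := (A * n ^ s)%N.
have M_ge1 : 1 <= INR M by apply/(le_INR 1)/leP; rewrite muln_gt0 hA expn_gt0 hn.
have M_gt0 : 0 < INR M by lra.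
have s_div_a_ge0 : 0 <= INR s / INR a.
  apply: Rmult_le_pos; first exact: pos_INR.
  by apply: Rlt_le; apply: Rinv_0_lt_compat; apply/lt_0_INR/ltP.
have [w0 | w_gt0] := posnP w.
  rewrite (omega_eq0 hx w0) w0 !muln0 mul0n pow_O Rmult_1_l INR_0 Rplus_0_l INR_1.
  rewrite -(Rpower_O _ M_gt0); apply: Rle_Rpower => //.
  by apply: Rmult_le_pos => //; exact: pos_INR.
have K_gt0 : (0 < a * w)%N by rewrite muln_gt0 ha.
apply: (pow_le_pow_inv _ K_gt0).
  by apply/Rmult_le_pos/Rlt_le/exp_pos/pow_le/pos_INR.
rewrite pow_bound_identity //.
have := dvdn_exp_le _ _ _ (a * w) hA hx hdiv => /leP /le_INR.
by rewrite !INR_expn mult_INR !INR_expn addn1.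
Qed.

Theorem lemma2p2 (s A : nat) (hs : (0 < s)%N) (hA : (0 < A)%N) (x n : nat)
  (hx : (0 < x)%N) (hn : (0 < n)%N)
  (hdiv : (x %| A ^ n * (n `!) ^ s)%N) :
  (forall a : nat, (0 < a)%N ->
    INR x <= INR (a * omega x + 1)%N ^ (n * omega x * (maxexp A + s))%N
             * Rpower (INR (A * n ^ s)%N)
                      (INR n * (INR (maxexp A * omega x)%N + INR s / INR a)))
  /\
  (A = 1%N -> forall a : nat, (0 < a)%N ->
    INR x <= INR (a * omega x + 1)%N ^ (n * omega x * s)%N
             * Rpower (INR (n ^ s)%N) (INR n * INR s / INR a)).
Proof.
split=> [a|A1 a] a_gt0; first exact: dvdn_fact_bound.
have := dvdn_fact_bound hA hx hn hdiv a_gt0.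
have -> : maxexp A = 0%N by rewrite A1 /maxexp (_ : primes 1 = [::]) // big_nil.
by rewrite A1 mul1n mul0n add0n INR_0 Rplus_0_l /Rdiv Rmult_assoc.
Qed.
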